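(* Let $T$ be an $spo$-tableau, let $x\in B_1$, and let $S_1$ be the box of $x\rightarrow T$ not in the shape of $T$. Let $y\in B_0$ be such that the insertion $(x\rightarrow T)\leftarrow y$ does not cause a cancellation, and let $S_2$ be the box of $(x\rightarrow T)\leftarrow y$ not in the shape of $x\rightarrow T$. Then $S_2$ lies in a column strictly to the right of the column of $S_1$ and in a row weakly above (row index $\le$) the row of $S_1$.
   Context: Fix positive integers $m,n$. Let $B_0=\{1,\bar1,2,\bar2,\dots,m,\bar m\}$, $B_1=\{1^\circ,\dots,n^\circ\}$, $B=B_0\cup B_1$, totally ordered by $1<\bar1<2<\bar2<\cdots<m<\bar m<1^\circ<\cdots<n^\circ$. Rows are numbered from the top starting at 1, columns from the left. An $spo$-tableau of shape $\lambda$ is a filling of the Young diagram of $\lambda$ with entries of $B$ such that (i) the boxes containing entries of $B_0$ form a Young diagram $\sigma\subseteq\lambda$, and this part is weakly increasing along rows, strictly increasing down columns, and every entry in row $i$ is $\ge i$; (ii) the entries of $B_1$ (filling $\lambda/\sigma$) are strictly increasing along rows and weakly increasing down columns. $spo$-insertion: a forward jeu de taquin slide on an empty box with right neighbour $a$ and lower neighbour $b$ moves $a$ left into the empty box if $a<b$ or ($a=b\in B_1$), and moves $b$ up into the empty box if $b<a$ or ($a=b\in B_0$); if only one neighbour exists it moves in; slides are repeated until the empty box has no right or lower neighbour, and then that box is deleted. Inserting $z\in B_0$ into row $r$: if no entry of the row exceeds $z$, append $z$ in a new box at the end of the row; otherwise let $w$ be the least entry of the row with $w>z$; if $z=r$ (unbarred)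 and $w=\bar r$, delete $\bar r$ leaving an empty box (a cancellation); otherwise replace $w$ by $z$, displacing $w$. Inserting $z\in B_1$ into column $c$: if no entry of the column exceeds $z$, append $z$ in a new box at the bottom; otherwise replace the least entry $w>z$ of the column by $z$, displacing $w$. To insert $x\in B_0$ into $T$ (result $T\leftarrow x$) start by inserting $x$ into row 1; to insert $x\in B_1$ (result $x\rightarrow T$) start by inserting $x$ into column 1. Whenever an entry $w$ is displaced from a box in row $r$, column $c$: if $w\in B_0$ insert it into row $r+1$; if $w\in B_1$ insert it into column $c+1$. The process ends when an entry is placed in a new box, or when a cancellation occurs, in which case the empty box is moved to an outer corner by forward slides and deleted. If no cancellation occurs the result has exactly one new box. *)

From mathcomp Require Import all_boot.
Set Implicit Arguments. Unset Strict Implicit. Unset Printing Implicit Defensive.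

(* L0 i false = i,  L0 i true = \bar i  (elements of B0)
   L1 j       = j°                      (elements of B1) *)
Inductive letter := L0 of nat & bool | L1 of nat.

Definition isB0 (a : letter) : bool := if a is L0 _ _ then true else false.

Definition in_B0 (m : nat) (a : letter) : Prop :=
  if a is L0 i _ then 0 < i <= m else False.
Definition in_B1 (n : nat) (a : letter) : Prop :=
  if a is L1 j then 0 < j <= n else False.
Definition in_B (m n : nat) (a : letter) : Prop := in_B0 m a \/ in_B1 n a.

Definition ltl (a b : letter) : bool :=
  match a, b with
  | L0 i s, L0 j t => (i < j) || ((i == j) && ~~ s && t)
  | L0 _ _, L1 _ => true
  | L1 _, L0 _ _ => false
  | L1 i, L1 j => i < j
  end.
Definition lel (a b : letter) : bool := ~~ ltl b a.
Definition eql (a b : letter) : bool := ~~ ltl a b && ~~ ltl b a.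

(* A filling is the list of its rows, top row first; rows and columns are
   indexed from 0 internally (row r here is row r+1 of the paper). *)
Definition tableau := seq (seq letter).

Definition get (T : tableau) (r c : nat) : option letter := onth (nth [::] T r) c.

Definition spo_tableau (m n : nat) (T : tableau) : Prop :=
  (forall r c a, get T r c = Some a -> in_B m n a) /\
  (* the filled boxes form the Young diagram of a partition lambda
     (no empty rows, closed under moving up/left) *)
  all (fun row => 0 < size row) T /\
  (forall r c a, get T r c = Some a ->
     forall r' c', r' <= r -> c' <= c -> exists b, get T r' c' = Some b) /\
  (forall r c a, get T r c = Some a -> isB0 a ->
     forall r' c', r' <= r -> c' <= c -> exists2 b, get T r' c' = Some b & isB0 b) /\
  (forall r c a b, get T r c = Some a -> get T r c.+1 = Some b ->
     isB0 a -> isB0 b -> lel a b) /\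
  (forall r c a b, get T r c = Some a -> get T r.+1 c = Some b ->
     isB0 a -> isB0 b -> ltl a b) /\
  (* (i) every B0 entry in (paper) row r+1 is >= r+1 *)
  (forall r c a, get T r c = Some a -> isB0 a -> lel (L0 r.+1 false) a) /\
  (forall r c a b, get T r c = Some a -> get T r c.+1 = Some b ->
     ~~ isB0 a -> ~~ isB0 b -> ltl a b) /\
  (forall r c a b, get T r c = Some a -> get T r.+1 c = Some b ->
     ~~ isB0 a -> ~~ isB0 b -> lel a b).

Definition set_box (T : tableau) (r c : nat) (z : letter) : tableau :=
  set_nth [::] T r (set_nth z (nth [::] T r) c z).

Definition delete_box (T : tableau) (r c : nat) : tableau :=
  [seq row <- set_nth [::] T r (take c (nth [::] T r)) | 0 < size row].

(* position (index) of the least entry w > z in a line (row or column,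
   given as the list of its boxes, None = no box); the leftmost/topmost
   one if the least value occurs several times *)
Definition least_pos (z : letter) (os : seq (option letter)) : nat :=
  find (fun o => if o is Some a then
                   ltl z a && all (fun o' => if o' is Some b then ltl z b ==> lel a b
                                             else true) os
                 else false) os.

Definition has_greater (z : letter) (os : seq (option letter)) : bool :=
  has (fun o => if o is Some a then ltl z a else false) os.

Definition row_line (T : tableau) (r : nat) : seq (option letter) :=
  map Some (nth [::] T r).
Definition col_line (T : tableau) (c : nat) : seq (option letter) :=
  map (fun r => get T r c) (iota 0 (size T)).
Definition col_bottom (T : tableau) (c : nat) : nat :=
  find (fun o => if o is None then true else false)
       (map (fun r => get T r c) (iota 0 (size T).+1)).

(* cancellation test when z is inserted into (paper) row r+1 and the least
   entry greater than z is w:  z = r+1 (unbarred) and w = \bar{r+1} *)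
Definition is_cancel (r : nat) (z w : letter) : bool :=
  match z, w with
  | L0 i false, L0 j true => (i == r.+1) && (j == r.+1)
  | _, _ => false
  end.

Inductive target := Row of nat | Col of nat.

(* Placed T' r c : process ended with a new box (r,c);
   Cancelled T' r c : a cancellation left an empty box at (r,c)
   (the filling T' still stores the old entry there, it is never read) *)
Inductive outcome := Placed of tableau & nat & nat | Cancelled of tableau & nat & nat.

Definition dest (c r : nat) (w : letter) : target :=
  if isB0 w then Row r.+1 else Col c.+1.

Inductive ins : tableau -> letter -> target -> outcome -> Prop :=
| ins_row_new T z r :
    ~~ has_greater z (row_line T r) ->
    ins T z (Row r) (Placed (set_box T r (size (nth [::] T r)) z) r (size (nth [::] T r)))
| ins_row_cancel T z r :
    has_greater z (row_line T r) ->
    is_cancel r z (nth z (nth [::] T r) (least_pos z (row_line T r))) ->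
    ins T z (Row r) (Cancelled T r (least_pos z (row_line T r)))
| ins_row_bump T z r o :
    has_greater z (row_line T r) ->
    let c := least_pos z (row_line T r) in
    let w := nth z (nth [::] T r) c in
    ~~ is_cancel r z w ->
    ins (set_box T r c z) w (dest c r w) o ->
    ins T z (Row r) o
| ins_col_new T z c :
    ~~ has_greater z (col_line T c) ->
    ins T z (Col c) (Placed (set_box T (col_bottom T c) c z) (col_bottom T c) c)
| ins_col_bump T z c o :
    has_greater z (col_line T c) ->
    let r := least_pos z (col_line T c) in
    let w := nth z (nth [::] T r) c in
    ins (set_box T r c z) w (dest c r w) o ->
    ins T z (Col c) o.

Definition move_left (T : tableau) (r c : nat) : bool :=
  match get T r c.+1, get T r.+1 c with
  | Some a, Some b => ltl a b || (eql a b && ~~ isB0 a)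
  | Some _, None => true
  | _, _ => false
  end.
Definition move_up (T : tableau) (r c : nat) : bool :=
  match get T r c.+1, get T r.+1 c with
  | Some a, Some b => ltl b a || (eql a b && isB0 a)
  | None, Some _ => true
  | _, _ => false
  end.

Inductive slides : tableau -> nat -> nat -> tableau -> Prop :=
| slides_done T r c :
    get T r c.+1 = None -> get T r.+1 c = None -> slides T r c (delete_box T r c)
| slides_left T r c a T' :
    get T r c.+1 = Some a -> move_left T r c ->
    slides (set_box T r c a) r c.+1 T' -> slides T r c T'
| slides_up T r c b T' :
    get T r.+1 c = Some b -> move_up T r c ->
    slides (set_box T r c b) r.+1 c T' -> slides T r c T'.

Inductive ins_result :=
| NewBox of tableau & nat & nat   (* result, and its new box (row, column) *)
| Cancel of tableau.

Inductive insert_from (t : target) (T : tableau) (z : letter) : ins_result -> Prop :=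
| insert_new T' r c : ins T z t (Placed T' r c) -> insert_from t T z (NewBox T' r c)
| insert_cancel Th r c T' :
    ins T z t (Cancelled Th r c) -> slides Th r c T' -> insert_from t T z (Cancel T').

Definition row_insert (T : tableau) (x : letter) (res : ins_result) : Prop :=
  insert_from (Row 0) T x res.
Definition col_insert (x : letter) (T : tableau) (res : ins_result) : Prop :=
  insert_from (Col 0) T x res.

From mathcomp Require Import all_boot.
Set Implicit Arguments. Unset Strict Implicit. Unset Printing Implicit Defensive.

(* Inserting the B1 letter x by columns bumps only B1 letters, along a path of
   boxes (P k, k), k <= c1, with weakly decreasing rows and strictly increasing
   letters a k, ending at the new box (r1, c1) = (P c1, c1); the B0 part of T is
   untouched.  Inserting the B0 letter y by rows then bumps B0 letters from row
   to row, each one leaving its row strictly left of all path boxes above the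
   next row.  So either the row insertion stops in a row r <= r1, which is
   longer than c1, or it bumps a B1 letter w out of a box (r, s) with r <= r1.
   If s > c1, the column insertion of w that follows moves right and weakly up.
   If s <= c1, then r <= P s, hence w <= a s < a (s+1); in each column up to c1
   the insertion then meets a larger path letter, bumps weakly above the path,
   and so cannot stop before column c1 + 1. *)

Lemma ltl_irr a : ltl a a = false.
Proof. by case: a => [i [] | i] /=; rewrite ?ltnn ?andbF. Qed.

Lemma ltl_trans a b c : ltl a b -> ltl b c -> ltl a c.
Proof.
case: a => [i s|i]; case: b => [j t|j]; case: c => [k u|k] //=; last exact: ltn_trans.
case/orP=> [ij|/andP[/andP[/eqP <- ns] ->]].
  case/orP=> [jk|/andP[/andP[/eqP <- _] _]]; last by rewrite ij.
  by rewrite (ltn_trans ij jk).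
by case/orP=> [->//|/andP[/andP[_]]].
Qed.

Lemma lel_anti a b : lel a b -> lel b a -> a = b.
Proof.
rewrite /lel; case: a => [i s|i]; case: b => [j t|j] //=.
  move=> /norP[ji h1] /norP[ij h2].
  have eij : i = j by apply/anti_leq; rewrite (leqNgt i j) (leqNgt j i) ij ji.
  by subst j; move: h1 h2; rewrite eqxx; case: s; case: t.
by rewrite -!leqNgt => ji ij; rewrite (@anti_leq i j) // ij ji.
Qed.

Lemma lel_eq_or_lt a b : lel a b -> a = b \/ ltl a b.
Proof.
move=> ab; case ba: (ltl a b); first by right.
by left; apply: lel_anti; rewrite // /lel ba.
Qed.

Lemma lel_refl a : lel a a.
Proof. by rewrite /lel ltl_irr. Qed.

Lemma ltlW a b : ltl a b -> lel a b.
Proof. by move=> ab; apply/negP => /(ltl_trans ab); rewrite ltl_irr. Qed.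

Lemma lel_ltl_trans a b c : lel a b -> ltl b c -> ltl a c.
Proof. by case/lel_eq_or_lt => [->//|]; apply: ltl_trans. Qed.

Lemma ltl_lel_trans a b c : ltl a b -> lel b c -> ltl a c.
Proof. by move=> ab /lel_eq_or_lt[<-//|]; apply: ltl_trans. Qed.

Lemma lel_trans a b c : lel a b -> lel b c -> lel a c.
Proof. by case/lel_eq_or_lt => [->//|ab] /(ltl_lel_trans ab)/ltlW. Qed.

Lemma ltl_B0_B1 a b : isB0 a -> ~~ isB0 b -> ltl a b.
Proof. by case: a => //; case: b. Qed.

Lemma ltl_B1 a b : ~~ isB0 a -> ltl a b -> ~~ isB0 b.
Proof. by case: a => //; case: b. Qed.

Lemma get_size U r c a : get U r c = Some a -> c < size (nth [::] U r).
Proof. by rewrite /get -onthTE => ->. Qed.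

Lemma get_nth U r c a d : get U r c = Some a -> nth d (nth [::] U r) c = a.
Proof. exact: onth_nth. Qed.

Lemma get_Some U r c d : c < size (nth [::] U r) ->
  get U r c = Some (nth d (nth [::] U r) c).
Proof. by move=> h; rewrite /get onthE (nth_map d). Qed.

Lemma get_out U r c : size U <= r -> get U r c = None.
Proof. by move=> h; rewrite /get nth_default // onth0n. Qed.

Lemma get_None_right U r c k : get U r c = None -> c <= k -> get U r k = None.
Proof.
move=> h ck; rewrite /get onth_default //.
case: (ltnP c (size (nth [::] U r))) => cs; last exact: leq_trans cs ck.
by rewrite (get_Some (L1 0) cs) in h.
Qed.

Lemma nth_col_line U c r : nth None (col_line U c) r = get U r c.
Proof.
rewrite /col_line; case: (ltnP r (size U)) => h.
  by rewrite (nth_map 0) ?size_iota // nth_iota.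
by rewrite nth_default ?size_map ?size_iota // get_out.
Qed.

Lemma nth_row_line U r c : nth None (row_line U r) c = get U r c.
Proof. by rewrite /row_line /get onthE. Qed.

Lemma get_set_box_same U r c z : get (set_box U r c z) r c = Some z.
Proof.
rewrite /get /set_box nth_set_nth /= eqxx onthE (nth_map z) ?nth_set_nth /= ?eqxx //.
by rewrite size_set_nth leq_max ltnSn.
Qed.

Lemma get_set_box_row U r c z r' c' : r' != r -> get (set_box U r c z) r' c' = get U r' c'.
Proof. by move=> ne; rewrite /get /set_box nth_set_nth /= (negbTE ne). Qed.

(* The side condition excludes a box [c] beyond the end of row [r], whose
   creation would pad the row with copies of [z]. *)
Lemma get_set_box U r c z r' c' : (r' != r) || (c' != c) ->
  (c <= size (nth [::] U r)) || (c < c') -> get (set_box U r c z) r' c' = get U r' c'.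
Proof.
case: (eqVneq r' r) => [->|ne] /= ne' hc; last exact: get_set_box_row.
rewrite /get /set_box nth_set_nth /= eqxx; set s := nth [::] U r.
case: (ltnP c' (size s)) => hs.
  rewrite !onthE !(nth_map z) ?nth_set_nth /= ?(negbTE ne') //.
  by rewrite size_set_nth leq_max hs orbT.
rewrite (onth_default hs) onth_default // size_set_nth geq_max hs andbT.
case/orP: hc => hc //; by rewrite ltn_neqAle eq_sym ne' (leq_trans hc hs).
Qed.

Lemma get_set_box_right U r c z r' k : c < k -> get (set_box U r c z) r' k = get U r' k.
Proof. by move=> ck; apply: get_set_box; rewrite ?ck ?orbT // (gtn_eqF ck) orbT. Qed.

Lemma get_set_box_left U r c z r' k : k < c -> c <= size (nth [::] U r) ->
  get (set_box U r c z) r' k = get U r' k.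
Proof. by move=> kc cs; apply: get_set_box; rewrite ?cs // (ltn_eqF kc) orbT. Qed.

Lemma get_set_box_other U r c z r' k a : get U r c = Some a -> (r' != r) || (k != c) ->
  get (set_box U r c z) r' k = get U r' k.
Proof. by move=> h ne; apply: get_set_box; rewrite // ltnW // (get_size h). Qed.

Lemma dest_B0 c r w : isB0 w -> dest c r w = Row r.+1.
Proof. by rewrite /dest => ->. Qed.

Lemma dest_B1 c r w : ~~ isB0 w -> dest c r w = Col c.+1.
Proof. by rewrite /dest => /negbTE ->. Qed.

Lemma nth_Some_size (os : seq (option letter)) j e :
  nth None os j = Some e -> j < size os.
Proof. by move=> he; rewrite ltnNge; apply/negP => /(nth_default None); rewrite he. Qed.

Lemma has_greaterP z os :
  reflect (exists j e, nth None os j = Some e /\ ltl z e) (has_greater z os).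
Proof.
apply: (iffP (has_nthP None)).
  by case=> j _; case e: (nth None os j) => [a|] // h; exists j, a.
by case=> j [e [h1 h2]]; exists j; rewrite ?h1 // (nth_Some_size h1).
Qed.

Definition least_greater z os k w :=
  [/\ nth None os k = Some w, ltl z w &
      forall j e, nth None os j = Some e -> ltl z e -> lel w e].

Lemma has_greater_min z os : has_greater z os -> exists k w, least_greater z os k w.
Proof.
elim: os => [//|o os IH] hg.
have tail_min : has_greater z os -> exists k w, least_greater z (o :: os) k w.
  move/IH => [k [w [h1 h2 h3]]].
  case: o hg => [a|] hg; last first.
    by exists k.+1, w; split => // -[|j] e //=; apply: h3.
  case za: (ltl z a); last first.
    exists k.+1, w; split => // -[|j] e /=; last exact: h3.
    by case=> <-; rewrite za.
  case aw: (ltl a w).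
    exists 0, a; split => // -[|j] e /=; first by case=> <-; rewrite lel_refl.
    by move=> he ze; apply: lel_trans (ltlW aw) (h3 _ _ he ze).
  exists k.+1, w; split => // -[|j] e /=; last exact: h3.
  by case=> <-; rewrite /lel aw.
case: o hg tail_min => [a|] /= hg tail_min; last exact: tail_min.
case hos: (has_greater z os); first exact: tail_min.
case/orP: hg => [za|]; last by rewrite hos.
exists 0, a; split => // -[|j] e /=; first by case=> <-; rewrite lel_refl.
by move=> he ze; case/negP: hos; apply/has_greaterP; exists j, e.
Qed.

Lemma least_posP z os : has_greater z os ->
  exists w, least_greater z os (least_pos z os) w /\
    forall j e, j < least_pos z os -> nth None os j = Some e -> ltl z e -> ltl w e.
Proof.
move=> hg.
pose below_all a :=
  all (fun o' => if o' is Some b then ltl z b ==> lel a b else true) os.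
have below_allP a :
    reflect (forall j e, nth None os j = Some e -> ltl z e -> lel a e) (below_all a).
  apply: (iffP (all_nthP None)) => h j.
    by move=> e he ze; move: (h j (nth_Some_size he)); rewrite he ze.
  move=> _ /=; case e: (nth None os j) => [b|] //; apply/implyP; exact: h e.
have [k [w [hk zw wmin]]] := has_greater_min hg.
have hp : has (fun o => if o is Some a then ltl z a && below_all a else false) os.
  apply/(has_nthP None); exists k; first exact: nth_Some_size hk.
  by rewrite hk zw; apply/below_allP.
have := nth_find None hp; rewrite -/(least_pos z os).
case e: (nth None os (least_pos z os)) => [w'|] //= /andP[zw' /below_allP w'min].
exists w'; split => // j e' jl he' ze'.
have := before_find None jl; rewrite -/(least_pos z os) he' ze' /=.
case lt: (ltl w' e') => // /below_allP; case=> j2 e2 h2 z2.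
by apply: lel_trans (w'min _ _ h2 z2); rewrite /lel lt.
Qed.

Lemma least_pos_le z os i b : nth None os i = Some b -> ltl z b ->
  (forall j e, i < j -> nth None os j = Some e -> ltl z e -> lel b e) ->
  least_pos z os <= i.
Proof.
move=> hb zb h.
have hg : has_greater z os by apply/has_greaterP; exists i, b.
have [w [[h1 h2 _] h4]] := least_posP hg.
rewrite leqNgt; apply/negP => il.
by have := h4 _ _ il hb zb; have := h _ _ il h1 h2; rewrite /lel => /negbTE ->.
Qed.

Lemma least_pos_lt z os i : has_greater z os ->
  (forall j, i <= j -> nth None os j = None) -> least_pos z os < i.
Proof.
move=> hg h; have [w [[h1 _ _] _]] := least_posP hg.
by rewrite ltnNge; apply/negP => /h; rewrite h1.
Qed.

Lemma col_bottomP U c : get U (col_bottom U c) c = None /\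
  forall r, r < col_bottom U c -> get U r c <> None.
Proof.
rewrite /col_bottom; set s := map _ (iota 0 (size U).+1).
have ns r : r < size s -> nth None s r = get U r c.
  by rewrite size_map size_iota => h; rewrite (nth_map 0) ?size_iota // nth_iota.
have hp : has (fun o => if o is None then true else false) s.
  apply/(has_nthP None); exists (size U); first by rewrite size_map size_iota.
  by rewrite ns ?size_map ?size_iota // get_out.
split.
  by have := nth_find None hp; rewrite ns -?has_find //; case: (get U _ c).
move=> r rl; have := before_find None rl.
by rewrite ns ?(leq_trans rl (find_size _ _)) //; case: (get U r c).
Qed.

Lemma col_bottom_le U c R : get U R c = None -> col_bottom U c <= R.
Proof. by move=> h; rewrite leqNgt; apply/negP => /(proj2 (col_bottomP U c)). Qed.

(* The part of the spo conditions that a column insertion started in column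
   [c] relies on, restricted to columns [>= c]; the column condition on B1
   letters is stated for any two rows, not only adjacent ones. *)
Definition semistd_from (U : tableau) (c : nat) : Prop :=
  [/\ forall r k a, c <= k -> get U r k = Some a ->
        forall r', r' <= r -> exists b, get U r' k = Some b,
      forall r k a, get U r k = Some a -> isB0 a ->
        forall r' k', r' <= r -> k' <= k -> c <= k' -> exists2 b, get U r' k' = Some b & isB0 b,
      forall r k a b, c <= k -> get U r k = Some a -> get U r k.+1 = Some b ->
        ~~ isB0 a -> ~~ isB0 b -> ltl a b &
      forall r r' k a b, c <= k -> r < r' -> get U r k = Some a -> get U r' k = Some b ->
        ~~ isB0 a -> ~~ isB0 b -> lel a b].

Definition agree_from (U V : tableau) (c : nat) : Prop :=
  forall r k, c <= k -> get U r k = get V r k \/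
    exists a b, [/\ get U r k = Some a, isB0 a, get V r k = Some b & isB0 b].

Lemma agree_from_sym U V c : agree_from U V c -> agree_from V U c.
Proof.
move=> ag r k ck.
by case: (ag r k ck) => [->|[a [b [? ? ? ?]]]]; [left|right; exists b, a].
Qed.

Lemma agree_fromW U V c c' : agree_from U V c -> c <= c' -> agree_from U V c'.
Proof. by move=> ag cc r k ck; apply: ag; apply: leq_trans cc ck. Qed.

Lemma agree_Some U V c r k a : agree_from U V c -> c <= k -> get U r k = Some a ->
  exists b, get V r k = Some b.
Proof. by move=> ag ck h; case: (ag r k ck) => [<-|[? [b [_ _ ? _]]]]; [exists a|exists b]. Qed.

Lemma agree_B0 U V c r k a : agree_from U V c -> c <= k -> get U r k = Some a -> isB0 a ->
  exists2 b, get V r k = Some b & isB0 b.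
Proof. by move=> ag ck h ba; case: (ag r k ck) => [<-|[? [b [_ _ ? ?]]]]; [exists a|exists b]. Qed.

Lemma agree_B1 U V c r k a : agree_from U V c -> c <= k -> get U r k = Some a -> ~~ isB0 a ->
  get V r k = Some a.
Proof.
move=> ag ck h na; case: (ag r k ck) => [<-//|[a' [_ [ha ba _ _]]]].
by move: ha; rewrite h => -[ea]; rewrite ea ba in na.
Qed.

Lemma semistd_fromW U c c' : semistd_from U c -> c <= c' -> semistd_from U c'.
Proof.
case=> hY hB0 hR hC cc; split.
- by move=> r k a ck; apply: hY; apply: leq_trans cc ck.
- by move=> r k a ha hb r' k' rr kk ck; apply: hB0 ha hb _ _ rr kk _; apply: leq_trans cc ck.
- by move=> r k a b ck; apply: hR; apply: leq_trans cc ck.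
- by move=> r r' k a b ck; apply: hC; apply: leq_trans cc ck.
Qed.

Lemma semistd_from_agree U V c : agree_from U V c -> semistd_from V c -> semistd_from U c.
Proof.
move=> ag [hY hB0 hR hC]; have ag' := agree_from_sym ag; split.
- move=> r k a ck ha r' rr.
  have [b hb] := agree_Some ag ck ha; have [b' hb'] := hY _ _ _ ck hb _ rr.
  exact: agree_Some ag' ck hb'.
- move=> r k a ha ba r' k' rr kk ck.
  have [b hb bb] := agree_B0 ag (leq_trans ck kk) ha ba.
  have [b' hb' bb'] := hB0 _ _ _ hb bb _ _ rr kk ck.
  exact: agree_B0 ag' ck hb' bb'.
- move=> r k a b ck ha hb na nb.
  exact: hR ck (agree_B1 ag ck ha na) (agree_B1 ag (leqW ck) hb nb) na nb.
- move=> r r' k a b ck rr ha hb na nb.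
  exact: hC ck rr (agree_B1 ag ck ha na) (agree_B1 ag ck hb nb) na nb.
Qed.

Lemma agree_set_box U V c r k z : agree_from U V c -> k < c ->
  k <= size (nth [::] U r) -> agree_from (set_box U r k z) V c.
Proof.
move=> ag kc ks r' c' cc; rewrite get_set_box; first exact: ag.
  by rewrite orbC (gtn_eqF (leq_trans kc cc)).
by rewrite ks.
Qed.

Lemma spo_semistd m n T : spo_tableau m n T -> semistd_from T 0.
Proof.
case=> [_ [_ [hY [hB0 [_ [_ [_ [hR1 hC1]]]]]]]]; split.
- by move=> r c a _ ha r' rr; have [b hb] := hY _ _ _ ha r' c rr (leqnn _); exists b.
- by move=> r c a ha hb r' c' rr cc _; apply: hB0 ha hb _ _ rr cc.
- by move=> r c a b _; apply: hR1.
move=> r r' c a b _; elim: r' b => [//|r' IH] b rr ha hb na nb.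
move: rr; rewrite ltnS leq_eqVlt => /orP[/eqP e|lt].
  by subst r'; apply: hC1 ha hb na nb.
have [d hd] := hY _ _ _ hb r' c (leqnSn _) (leqnn _).
case bd: (isB0 d).
  have [e he1 he2] := hB0 _ _ _ hd bd r c (ltnW lt) (leqnn _).
  by move: he1; rewrite ha => -[ee]; rewrite ee he2 in na.
by apply: lel_trans (IH _ lt ha hd na (negbT bd)) (hC1 _ _ _ _ hd hb (negbT bd) nb).
Qed.

Definition col_slot (U : tableau) c v R :=
  get U R c = None \/ exists2 b, get U R c = Some b & ltl v b.

Lemma least_pos_le_slot U c v R : semistd_from U c -> ~~ isB0 v ->
  has_greater v (col_line U c) -> col_slot U c v R -> least_pos v (col_line U c) <= R.
Proof.
case=> hY _ _ hC nv hg [hN|[b hb vb]].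
  apply: ltnW; apply: least_pos_lt => // j Rj; rewrite nth_col_line.
  case e: (get U j c) => [d|] //.
  by have [b' hb'] := hY _ _ _ (leqnn _) e _ Rj; rewrite hb' in hN.
apply: (least_pos_le (b := b)); rewrite ?nth_col_line // => j e Rj he ve.
rewrite nth_col_line in he.
exact: hC _ _ _ _ _ (leqnn _) Rj hb he (ltl_B1 nv vb) (ltl_B1 nv ve).
Qed.

Lemma col_bottom_le_slot U c v R : col_slot U c v R ->
  ~~ has_greater v (col_line U c) -> col_bottom U c <= R.
Proof.
case=> [hN|[b hb vb]] ng; first exact: col_bottom_le.
by case/negP: ng; apply/has_greaterP; exists R, b; rewrite nth_col_line.
Qed.

Lemma col_slot_right U c r s w : semistd_from U c -> c <= s ->
  get U r s = Some w -> ~~ isB0 w -> col_slot U s.+1 w r.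
Proof.
case=> _ hB0 hR _ cs hw nw; rewrite /col_slot.
case e: (get U r s.+1) => [b|]; last by left.
right; exists b => //; case bb: (isB0 b); last exact: hR _ _ _ _ cs hw e nw (negbT bb).
have [b' hb1 hb2] := hB0 _ _ _ e bb r s (leqnn _) (leqnSn _) cs.
by move: hb1; rewrite hw => -[eb]; rewrite eb hb2 in nw.
Qed.

Lemma col_slot_agree U V c k w R : agree_from U V c -> c <= k -> ~~ isB0 w ->
  col_slot V k w R -> col_slot U k w R.
Proof.
move=> ag ck nw sl; case: (ag R k ck) => [e|[b [b' [_ _ hb' bb']]]]; first by rewrite /col_slot e.
by case: sl; rewrite hb' // => -[b'' [<-]] /(ltl_B1 nw); rewrite bb'.
Qed.

Lemma col_bump_step U c v : semistd_from U c -> ~~ isB0 v -> has_greater v (col_line U c) ->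
  let u := least_pos v (col_line U c) in
  exists w, [/\ get U u c = Some w, ltl v w, ~~ isB0 w,
    semistd_from (set_box U u c v) c.+1 & col_slot (set_box U u c v) c.+1 w u].
Proof.
move=> semiU nv hg u.
have [w [[hw vw _] _]] := least_posP hg; rewrite nth_col_line -/u in hw.
have nw := ltl_B1 nv vw.
have right k r : c < k -> get (set_box U u c v) r k = get U r k by apply: get_set_box_right.
exists w; split => //.
  by apply: semistd_from_agree (semistd_fromW semiU (leqnSn _)) => r k ck; left; apply: right.
by rewrite /col_slot right //; apply: col_slot_right semiU (leqnn c) hw nw.
Qed.

(* A column insertion of a B1 letter that starts in column [c] and ends with a
   new box [(r', c')] bumps along the boxes [(P k, k)], [c <= k <= c']: the
   letter [a k] is inserted into column [k] and lands in row [P k]. *)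
Record col_path (U U' : tableau) c v r' c' (P : nat -> nat) (a : nat -> letter) : Prop :=
  ColPath {
  path_le : c <= c';
  path_end : P c' = r';
  path_head : a c = v;
  path_get : forall k, c <= k <= c' -> get U' (P k) k = Some (a k) /\ ~~ isB0 (a k);
  path_off : forall r k, c <= k -> (c' < k) || (r != P k) -> get U' r k = get U r k;
  path_left : forall r k, k < c -> get U' r k = get U r k;
  path_bumped : forall k, c <= k < c' ->
    [/\ get U (P k) k = Some (a k.+1), ltl (a k) (a k.+1) & P k.+1 <= P k];
  path_above : forall k r e, c <= k <= c' -> r < P k -> get U r k = Some e -> lel e (a k);
  path_below : forall k r e, c <= k <= c' -> P k < r -> get U r k = Some e -> ltl (a k) e;
  path_new : get U r' c' = None;
  path_end_above : forall r, r < r' -> get U r c' <> None;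
  path_first : forall R, col_slot U c v R -> P c <= R }.

(* Ensures that a new box at the bottom of column [c] has a left neighbour,
   so that [set_box] does not pad the row. *)
Definition col_path_pre U c v :=
  exists R, col_slot U c v R /\ (0 < c -> forall r, r <= R -> get U r c.-1 <> None).

Lemma col_path_new U c v : semistd_from U c -> ~~ isB0 v -> col_path_pre U c v ->
  ~~ has_greater v (col_line U c) ->
  let rb := col_bottom U c in
  col_path U (set_box U rb c v) c v rb c (fun _ => rb) (fun _ => v).
Proof.
move=> [hY _ _ _] nv [R [SR hR]] ng rb.
have rbR : rb <= R := col_bottom_le_slot SR ng.
have cs : c <= size (nth [::] U rb).
  case: c {ng SR hY} hR rb rbR => [//|c] hR rb rbR.
  by case e: (get U rb c) (hR isT rb rbR) => [d|] // _; apply: get_size e.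
have [hN hS] := col_bottomP U c.
have kc k : c <= k <= c -> k = c by move=> /andP[h1 h2]; apply/anti_leq; rewrite h1 h2.
split => //.
- by move=> k /kc ->; rewrite get_set_box_same.
- move=> r k ck h; apply: get_set_box; last by rewrite cs.
  by case/orP: h => [ck'|->]; rewrite ?(gtn_eqF ck') ?orbT.
- by move=> r k kc'; apply: get_set_box_left.
- by move=> k /andP[h1 h2]; move: (leq_ltn_trans h1 h2); rewrite ltnn.
- move=> k r e /kc -> _ he; rewrite /lel; apply/negP => ve; case/negP: ng.
  by apply/has_greaterP; exists r, e; rewrite nth_col_line.
- move=> k r e /kc -> rr he; have [b hb] := hY _ _ _ (leqnn _) he rb (ltnW rr).
  by rewrite hb in hN.
- by move=> R' SR'; apply: col_bottom_le_slot SR' ng.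
Qed.

Lemma col_bump_sorted U c v : semistd_from U c -> ~~ isB0 v -> has_greater v (col_line U c) ->
  let u := least_pos v (col_line U c) in
  (forall r e, r < u -> get U r c = Some e -> lel e v) /\
  (forall r e, u < r -> get U r c = Some e -> ltl v e).
Proof.
move=> semiU nv hg u.
have [w [[hw vw _] wstr]] := least_posP hg; rewrite nth_col_line -/u in hw.
have nw := ltl_B1 nv vw.
case: semiU => _ hB0 _ hC; split=> r e.
  move=> ru he; rewrite /lel; apply/negP => ve.
  have := wstr _ _ ru (etrans (nth_col_line _ _ _) he) ve.
  by move: (hC _ _ _ _ _ (leqnn _) ru he hw (ltl_B1 nv ve) nw); rewrite /lel => /negbTE ->.
move=> ur he; case eb: (isB0 e).
  have [b hb1 hb2] := hB0 _ _ _ he eb u c (ltnW ur) (leqnn _) (leqnn _).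
  by move: hb1; rewrite hw => -[eb']; rewrite eb' hb2 in nw.
exact: ltl_lel_trans vw (hC _ _ _ _ _ (leqnn _) ur hw he nw (negbT eb)).
Qed.

Lemma col_path_cons U U' c v w r' c' P a : semistd_from U c -> ~~ isB0 v ->
  has_greater v (col_line U c) ->
  let u := least_pos v (col_line U c) in
  get U u c = Some w -> col_path (set_box U u c v) U' c.+1 w r' c' P a ->
  col_path U U' c v r' c' (fun k => if k == c then u else P k) (fun k => if k == c then v else a k).
Proof.
move=> semiU nv hg u hw [le' end' head' get' off' left' bumped' above' below' new' end_above' first'].
have [w' [hw' vw nw _ slot]] := col_bump_step semiU nv hg.
rewrite -/u hw in hw'; case: hw' => ew; subst w'.
have [above below] := col_bump_sorted semiU nv hg.
have right r k : c < k -> get (set_box U u c v) r k = get U r k by apply: get_set_box_right.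
have gtc k : c <= k -> k != c -> c < k by move=> h1 ne; rewrite ltn_neqAle eq_sym ne h1.
split => //.
- exact: ltnW.
- by rewrite (gtn_eqF le').
- by rewrite eqxx.
- move=> k /andP[h1 h2]; case: (eqVneq k c) => [->|ne]; first by rewrite left' ?get_set_box_same.
  by apply: get'; rewrite h2 gtc.
- move=> r k ck h; case: (eqVneq k c) => [ek|ne].
    subst k; move: h; rewrite /= eqxx ltnNge (ltnW le') /= => h.
    by rewrite left' // get_set_box_row.
  by move: h; rewrite /= (negbTE ne) => h; rewrite off' ?gtc // right ?gtc.
- move=> r k kc; rewrite left' ?(leq_trans kc) // get_set_box_left //.
  exact: ltnW (get_size hw).
- move=> k /andP[h1 h2]; case: (eqVneq k c) => [ek|ne].
    subst k; rewrite (gtn_eqF (ltnSn _)) head' hw; split => //.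
    exact: first' slot.
  have ck := gtc _ h1 ne.
  rewrite (gtn_eqF (leqW ck)); have [e1 e2 e3] := bumped' k (introT andP (conj ck h2)).
  by rewrite -right.
- move=> k r e /andP[h1 h2]; case: (eqVneq k c) => [->|ne]; first exact: above.
  have ck := gtc _ h1 ne; move=> rr he; apply: above' rr _; by rewrite ?ck ?right.
- move=> k r e /andP[h1 h2]; case: (eqVneq k c) => [->|ne]; first exact: below.
  have ck := gtc _ h1 ne; move=> rr he; apply: below' rr _; by rewrite ?ck ?right.
- by rewrite -right.
- by move=> r rr; rewrite -right //; apply: end_above'.
- by move=> R SR; rewrite eqxx; apply: least_pos_le_slot.
Qed.

Lemma ins_col_path U v t o : ins U v t o -> forall c U' r' c', t = Col c -> o = Placed U' r' c' ->
  semistd_from U c -> ~~ isB0 v -> col_path_pre U c v -> exists P a, col_path U U' c v r' c' P a.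
Proof.
elim=> {U v t o} // [U v c0 ng | U v c0 o hg u w _ IH] c U' r' c' [<-].
  by case=> <- <- <- semiU nv pre; eexists _, _; apply: col_path_new.
move=> eo semiU nv pre.
have [w0 [hw0 _ nw semi1 slot1]] := col_bump_step semiU nv hg.
rewrite /w (get_nth _ hw0) dest_B1 // in IH.
have pre1 : col_path_pre (set_box U u c0 v) c0.+1 w0.
  exists u; split => // _ r ru /=.
  case: (eqVneq r u) => [->|ne]; first by rewrite get_set_box_same.
  case: semiU => hY _ _ _; have [b hb] := hY _ _ _ (leqnn _) hw0 _ ru.
  by rewrite get_set_box_row // hb.
have [P [a ph]] := IH _ _ _ _ erefl eo semi1 nw pre1.
by eexists _, _; apply: col_path_cons ph.
Qed.

Lemma col_ins_slot U v t o : ins U v t o -> forall c U' r' c' R, t = Col c -> o = Placed U' r' c' ->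
  semistd_from U c -> ~~ isB0 v -> col_slot U c v R -> r' <= R /\ c <= c'.
Proof.
elim=> {U v t o} // [U v c0 ng | U v c0 o hg u w _ IH] c U' r' c' R [<-].
  by case=> _ <- <- _ _ SR; split => //; apply: col_bottom_le_slot SR ng.
move=> eo semiU nv SR.
have [w0 [hw0 _ nw semi1 slot1]] := col_bump_step semiU nv hg.
rewrite /w (get_nth _ hw0) dest_B1 // in IH.
have [h1 h2] := IH _ _ _ _ _ erefl eo semi1 nw slot1.
by split; [apply: leq_trans h1 (least_pos_le_slot semiU nv hg SR) | apply: ltnW].
Qed.

Definition agree_B0_above (U V : tableau) r := forall r' k, get U r' k = get V r' k \/
  r' < r /\ exists a b, [/\ get U r' k = Some a, isB0 a, get V r' k = Some b & isB0 b].

Lemma agree_B0_above_from U V r c : agree_B0_above U V r -> agree_from U V c.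
Proof. by move=> ag r' k _; case: (ag r' k) => [->|[_ h]]; [left|right]. Qed.

Lemma agree_B0_above_row U V r k : agree_B0_above U V r -> get U r k = get V r k.
Proof. by move=> ag; case: (ag r k) => [//|[]]; rewrite ltnn. Qed.

Section AfterColumnInsertion.
Variables (T T1 : tableau) (x : letter) (r1 c1 : nat) (P : nat -> nat) (a : nat -> letter).
Hypothesis semistdT : semistd_from T 0.
Hypothesis rowB0 : forall r c e e', get T r c = Some e -> get T r c.+1 = Some e' ->
  isB0 e -> isB0 e' -> lel e e'.
Hypothesis colB0 : forall r c e e', get T r c = Some e -> get T r.+1 c = Some e' ->
  isB0 e -> isB0 e' -> ltl e e'.
Hypothesis path : col_path T T1 0 x r1 c1 P a.

Lemma T1_on_path k : k <= c1 -> get T1 (P k) k = Some (a k).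
Proof. by move=> kc; case: (path_get path (k := k)); rewrite ?kc. Qed.

Lemma path_letter_B1 k : k <= c1 -> ~~ isB0 (a k).
Proof. by move=> kc; case: (path_get path (k := k)); rewrite ?kc. Qed.

Lemma T1_off_path r k : ~~ ((k <= c1) && (r == P k)) -> get T1 r k = get T r k.
Proof. by rewrite negb_and -ltnNge => h; apply: (path_off path). Qed.

Lemma T1_right r k : c1 < k -> get T1 r k = get T r k.
Proof. by move=> ck; apply: T1_off_path; rewrite leqNgt ck. Qed.

Lemma path_step k : k < c1 ->
  [/\ get T (P k) k = Some (a k.+1), ltl (a k) (a k.+1) & P k.+1 <= P k].
Proof. by move=> kc; apply: (path_bumped path). Qed.

Lemma T_path_not_B0 k b : k <= c1 -> get T (P k) k = Some b -> ~~ isB0 b.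
Proof.
move=> kc hb; case: (ltngtP k c1) kc => // [kc|ek] _.
  have [h1 _ _] := path_step kc; move: hb; rewrite h1 => -[<-].
  exact: path_letter_B1.
by move: hb; rewrite ek (path_end path) (path_new path).
Qed.

Lemma T1_B0 r k e : get T1 r k = Some e -> isB0 e -> get T r k = Some e.
Proof.
move=> he be; case pb: ((k <= c1) && (r == P k)); last by rewrite -T1_off_path ?pb.
case/andP: pb => kc /eqP er; move: he; rewrite er T1_on_path // => -[ea].
by move: (path_letter_B1 kc); rewrite ea be.
Qed.

Lemma T1_Some r k e : get T r k = Some e -> exists e', get T1 r k = Some e'.
Proof.
move=> he; case pb: ((k <= c1) && (r == P k)); last by exists e; rewrite T1_off_path ?pb.
by case/andP: pb => kc /eqP ->; exists (a k); apply: T1_on_path.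
Qed.

Lemma semistd_T1 : semistd_from T1 c1.+1.
Proof.
by apply: semistd_from_agree (semistd_fromW semistdT (leq0n _)) => r k ck; left; apply: T1_right.
Qed.

Lemma T1_row_adj_B1 r k e e' : get T1 r k = Some e -> get T1 r k.+1 = Some e' ->
  ~~ isB0 e -> ~~ isB0 e' -> ltl e e'.
Proof.
case: semistdT => _ _ hR _ he he' ne ne'.
case pb: ((k <= c1) && (r == P k)); case pb': ((k.+1 <= c1) && (r == P k.+1)).
- case/andP: pb => _ /eqP er; case/andP: pb' => kc' /eqP er'.
  move: he he'; rewrite {1}er T1_on_path ?(ltnW kc') // => -[<-].
  rewrite er' T1_on_path // => -[<-].
  by case: (path_step kc').
- case/andP: pb => kc /eqP er.
  have hT' : get T r k.+1 = Some e' by rewrite -T1_off_path ?pb'.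
  move: he; rewrite er T1_on_path // => -[<-].
  case: (ltngtP k c1) kc => // [kc|ek] _.
    have [h1 h2 _] := path_step kc; rewrite -er in h1.
    exact: ltl_trans h2 (hR _ _ _ _ (leq0n _) h1 hT' (path_letter_B1 kc) ne').
  have := path_new path; rewrite -(path_end path) -ek -er => hN.
  by rewrite (get_None_right hN (leqnSn _)) in hT'.
- case/andP: pb' => kc' /eqP er'.
  have hT : get T r k = Some e by rewrite -T1_off_path ?pb.
  have [_ h2 h3] := path_step kc'.
  move: he'; rewrite er' T1_on_path // => -[<-].
  have ne'' : r != P k by move: pb; rewrite (ltnW kc') /= => /negbT.
  have rk : r < P k by rewrite ltn_neqAle ne'' er' h3.
  by apply: lel_ltl_trans h2; apply: (path_above path _ rk hT); rewrite /= ltnW.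
- have hT : get T r k = Some e by rewrite -T1_off_path ?pb.
  have hT' : get T r k.+1 = Some e' by rewrite -T1_off_path ?pb'.
  exact: hR _ _ _ _ (leq0n _) hT hT' ne ne'.
Qed.

Lemma T1_row_adj r k e e' : get T1 r k = Some e -> get T1 r k.+1 = Some e' -> lel e e'.
Proof.
move=> he he'; case: semistdT => _ hB0 _ _.
case b': (isB0 e').
  have hT' := T1_B0 he' b'.
  have [d hd bd] := hB0 _ _ _ hT' b' r k (leqnn _) (leqnSn _) (leq0n _).
  have onp : ~~ ((k <= c1) && (r == P k)).
    by apply/negP => /andP[kc /eqP er]; rewrite er in hd; move: (T_path_not_B0 kc hd); rewrite bd.
  by move: he; rewrite T1_off_path // hd => -[<-]; apply: rowB0 hd hT' bd b'.
case b: (isB0 e); first by apply: ltlW; apply: ltl_B0_B1; rewrite ?b'.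
by apply: ltlW; apply: T1_row_adj_B1 he he' _ _; rewrite ?b ?b'.
Qed.

Lemma T1_row_sorted r k k' e e' : k <= k' -> get T1 r k = Some e -> get T1 r k' = Some e' ->
  lel e e'.
Proof.
elim: k' e' => [|k' IH] e'.
  by rewrite leqn0 => /eqP -> ->[<-]; apply: lel_refl.
rewrite leq_eqVlt => /orP[/eqP -> -> [<-]|]; first exact: lel_refl.
rewrite ltnS => kk he he'.
case ed: (get T1 r k') => [d|]; last by rewrite (get_None_right ed (leqnSn _)) in he'.
exact: lel_trans (IH _ kk he ed) (T1_row_adj ed he').
Qed.

Lemma slot_right_of_path_end U u w : get T1 u c1 = Some w -> ~~ isB0 w ->
  agree_from U T1 c1.+1 -> col_slot U c1.+1 w u.
Proof.
move=> hw nw ag; apply: (col_slot_agree ag (leqnn _) nw).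
rewrite /col_slot T1_right //; have [eu|ne] := eqVneq u (P c1).
  by left; apply: get_None_right (leqnSn _); rewrite eu (path_end path) (path_new path).
by apply: col_slot_right semistdT (leq0n _) _ nw; rewrite -T1_off_path // (negbTE ne) andbF.
Qed.

Lemma col_ins_under_path U v t o : ins U v t o ->
  forall c U' r' c', t = Col c -> o = Placed U' r' c' -> agree_from U T1 c -> c <= c1 ->
  ltl v (a c) -> ~~ isB0 v -> c1 < c' /\ r' <= r1.
Proof.
elim=> {U v t o} // [U v c0 ng | U v c0 o hg u w ins_w IH] c U' r' c' [<-].
  move=> _ ag cc va nv; case/negP: ng; apply/has_greaterP; exists (P c0), (a c0).
  by rewrite nth_col_line (agree_B1 (agree_from_sym ag) (leqnn _) (T1_on_path cc)) ?path_letter_B1.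
move=> eo ag cc va nv.
have [w0 [[hw0 vw0 _] _]] := least_posP hg; rewrite nth_col_line -/u in hw0.
have nw := ltl_B1 nv vw0.
rewrite /w (get_nth _ hw0) dest_B1 // in IH ins_w.
have hU := agree_B1 (agree_from_sym ag) (leqnn _) (T1_on_path cc) (path_letter_B1 cc).
have uP : u <= P c0.
  apply: (least_pos_le (b := a c0)); rewrite ?nth_col_line // => j e Pj he ve.
  rewrite nth_col_line in he; have := agree_B1 ag (leqnn _) he (ltl_B1 nv ve).
  rewrite T1_off_path ?(gtn_eqF Pj) ?andbF // => hT.
  by apply/ltlW/(path_below path _ Pj hT); rewrite cc.
have hT1 := agree_B1 ag (leqnn _) hw0 nw.
have wa : lel w0 (a c0).
  case: (eqVneq u (P c0)) => [eu|ne].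
    by move: hT1; rewrite eu T1_on_path // => -[->]; apply: lel_refl.
  rewrite T1_off_path ?(negbTE ne) ?andbF // in hT1.
  by apply: (path_above path _ _ hT1); rewrite ?cc // ltn_neqAle ne uP.
have ag1 : agree_from (set_box U u c0 v) T1 c0.+1.
  exact: agree_set_box (agree_fromW ag (leqnSn _)) (ltnSn _) (ltnW (get_size hw0)).
case: (ltngtP c0 c1) cc => // [lt|ec] _.
  apply: (IH _ _ _ _ erefl eo ag1 lt _ nw).
  by have [_ h3 _] := path_step lt; apply: lel_ltl_trans wa h3.
subst c0.
have semi1 := semistd_from_agree ag1 semistd_T1.
have ur : u <= r1 by rewrite -(path_end path).
have [r'u cc'] := col_ins_slot ins_w erefl eo semi1 nw (slot_right_of_path_end hT1 nw ag1).
by split => //; apply: leq_trans r'u ur.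
Qed.

(* [q] is the column from which [z] was bumped out of row [r - 1]: every box of
   the column-insertion path above row [r] lies right of it. *)
Definition row_entry_inv r z := r = 0 \/ exists q,
  (forall e, get T1 r q = Some e -> ltl z e) /\ forall k, k <= c1 -> P k < r -> q < k.

Lemma least_pos_row_le U r z q : agree_B0_above U T1 r -> has_greater z (row_line U r) ->
  (forall e, get T1 r q = Some e -> ltl z e) -> least_pos z (row_line U r) <= q.
Proof.
move=> ag hg zq; case eq: (get T1 r q) => [e|].
  apply: (least_pos_le (b := e)); rewrite ?nth_row_line ?(agree_B0_above_row _ ag) ?zq //.
  move=> j e' qj; rewrite nth_row_line (agree_B0_above_row _ ag) => he' _.
  exact: T1_row_sorted (ltnW qj) eq he'.
apply/ltnW/least_pos_lt => // j qj.
by rewrite nth_row_line (agree_B0_above_row _ ag) (get_None_right eq qj).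
Qed.

Lemma least_pos_left_of_path U r z k : agree_B0_above U T1 r -> has_greater z (row_line U r) ->
  row_entry_inv r z -> k <= c1 -> P k < r -> least_pos z (row_line U r) < k.
Proof.
move=> ag hg [->//|[q [zq qP]]] kc Pk.
exact: leq_ltn_trans (least_pos_row_le ag hg zq) (qP _ kc Pk).
Qed.

Lemma row_new_box U r z : isB0 z -> ~~ has_greater z (row_line U r) ->
  agree_B0_above U T1 r -> row_entry_inv r z -> c1 < size (nth [::] U r) /\ r <= r1.
Proof.
move=> bz ng ag inv; have rowE k := agree_B0_above_row k ag.
have le_z k e : get U r k = Some e -> lel e z.
  move=> he; rewrite /lel; apply/negP => ze; case/negP: ng.
  by apply/has_greaterP; exists k, e; rewrite nth_row_line.
have pc1 := path_end path.
case: (ltngtP r r1) => [lt|gt|er].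
- split => //; have := path_end_above path lt; case e: (get T r c1) => [d|] // _.
  by apply: (@get_size _ _ _ d); rewrite rowE T1_off_path // pc1 (ltn_eqF lt) andbF.
- exfalso; case: inv => [r0|[q [zq qP]]]; first by rewrite r0 in gt.
  set L := size (nth [::] U r).
  have Lq : L <= q.
    rewrite leqNgt; apply/negP => qL; have hq := get_Some (L1 0) qL; rewrite rowE in hq.
    by have := le_z _ _ (etrans (rowE q) hq); rewrite /lel zq.
  have PL : P (minn L c1) < r.
    case: (leqP c1 L) => cL; first by rewrite pc1.
    rewrite ltnNge; apply/negP => rP; case: semistdT => hY _ _ _.
    have [h1 _ _] := path_step cL; have [b hb] := hY _ _ _ (leq0n _) h1 _ rP.
    have [e' he'] := T1_Some hb.
    by move: (get_size (etrans (rowE L) he')); rewrite ltnn.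
  by move: (qP _ (geq_minr _ _) PL); rewrite ltnNge (leq_trans (geq_minl _ _) Lq).
- exfalso; move: (le_z c1 (a c1)); rewrite rowE er -pc1 T1_on_path // /lel.
  by rewrite ltl_B0_B1 ?path_letter_B1 // => /(_ erefl).
Qed.

Lemma row_bump_B0 U r z w : isB0 z -> has_greater z (row_line U r) ->
  let s := least_pos z (row_line U r) in
  get U r s = Some w -> isB0 w -> agree_B0_above U T1 r -> row_entry_inv r z ->
  agree_B0_above (set_box U r s z) T1 r.+1 /\ row_entry_inv r.+1 w.
Proof.
move=> bz hg s hw bw ag inv; case: semistdT => _ hB0 _ _.
have hT1 : get T1 r s = Some w by rewrite -(agree_B0_above_row _ ag).
have hT := T1_B0 hT1 bw.
split.
  move=> r' k; case: (boolP ((r' == r) && (k == s))) => [/andP[/eqP -> /eqP ->]|ne].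
    by right; split => //; exists z, w; rewrite get_set_box_same.
  rewrite (get_set_box_other _ hw); last by rewrite -negb_and.
  by case: (ag r' k) => [->|[h1 h2]]; [left|right; split => //; apply: ltnW].
right; exists s; split.
  move=> e he; case be: (isB0 e); last by apply: ltl_B0_B1; rewrite ?be.
  exact: colB0 hT (T1_B0 he be) bw be.
move=> k kc; rewrite ltnS leq_eqVlt => /orP[/eqP ek|lt]; last first.
  exact: least_pos_left_of_path ag hg inv kc lt.
rewrite ltnNge; apply/negP => ks.
have [b hb bb] := hB0 _ _ _ hT bw r k (leqnn _) ks (leq0n _).
by rewrite -ek in hb; move: (T_path_not_B0 kc hb); rewrite bb.
Qed.

Lemma row_bump_B1 U r z w U' r2 c2 : isB0 z -> has_greater z (row_line U r) ->
  let s := least_pos z (row_line U r) in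
  get U r s = Some w -> ~~ isB0 w -> agree_B0_above U T1 r -> row_entry_inv r z ->
  ins (set_box U r s z) w (Col s.+1) (Placed U' r2 c2) -> c1 < c2 /\ r2 <= r1.
Proof.
move=> bz hg s hw nw ag inv ins_w.
have hT1 : get T1 r s = Some w by rewrite -(agree_B0_above_row _ ag).
have ag1 : agree_from (set_box U r s z) T1 s.+1.
  exact: agree_set_box z (agree_B0_above_from ag) (ltnSn _) (ltnW (get_size hw)).
have pc1 := path_end path.
case: (ltnP c1 s) => cs1.
  have rr : r <= r1.
    rewrite leqNgt; apply/negP; rewrite -{1}pc1 => lt.
    by have := least_pos_left_of_path ag hg inv (leqnn _) lt; rewrite -/s ltnNge ltnW.
  have hT : get T r s = Some w by rewrite -T1_right.
  have semi1 := semistd_from_agree ag1 (semistd_fromW semistd_T1 (leqW cs1)).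
  have slot : col_slot (set_box U r s z) s.+1 w r.
    rewrite /col_slot get_set_box_right // (agree_B0_above_row _ ag) T1_right ?(leqW cs1) //.
    exact: col_slot_right semistdT (leq0n s) hT nw.
  have [h1 h2] := col_ins_slot ins_w erefl erefl semi1 nw slot.
  by split; [apply: leq_trans cs1 (ltnW h2) | apply: leq_trans h1 rr].
have rP : r <= P s.
  by rewrite leqNgt; apply/negP => /(least_pos_left_of_path ag hg inv cs1); rewrite ltnn.
have wa : lel w (a s).
  have [er|ne] := eqVneq r (P s).
    by move: hT1; rewrite er T1_on_path // => -[->]; apply: lel_refl.
  rewrite T1_off_path ?(negbTE ne) ?andbF // in hT1.
  by apply: (path_above path _ _ hT1); rewrite ?cs1 // ltn_neqAle ne rP.
case: (ltngtP s c1) cs1 => // [lt|es] _.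
  apply: (col_ins_under_path ins_w erefl erefl ag1 lt _ nw).
  by have [_ h _] := path_step lt; apply: lel_ltl_trans wa h.
rewrite es in ag1 hT1 ins_w.
have semi1 := semistd_from_agree ag1 semistd_T1.
have rr : r <= r1 by rewrite -pc1 -es.
have [h1 h2] := col_ins_slot ins_w erefl erefl semi1 nw (slot_right_of_path_end hT1 nw ag1).
by split => //; apply: leq_trans h1 rr.
Qed.

Lemma row_ins_right_above U z t o : ins U z t o -> forall r U' r2 c2, t = Row r ->
  o = Placed U' r2 c2 -> isB0 z -> agree_B0_above U T1 r -> row_entry_inv r z ->
  c1 < c2 /\ r2 <= r1.
Proof.
elim=> {U z t o} // [U z r0 ng | U z r0 o hg s w _ ins_w IH] r U' r2 c2 [<-].
  by case=> _ <- <- bz ag inv; apply: row_new_box bz ng ag inv.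
move=> eo bz ag inv.
have [w0 [[hw0 _ _] _]] := least_posP hg; rewrite nth_row_line -/s in hw0.
rewrite /w (get_nth _ hw0) in ins_w IH.
case bw: (isB0 w0).
  have [ag1 inv1] := row_bump_B0 bz hg hw0 bw ag inv.
  exact: IH _ _ _ _ (dest_B0 _ _ bw) eo bw ag1 inv1.
have nw : ~~ isB0 w0 by rewrite bw.
rewrite dest_B1 // eo in ins_w.
exact: row_bump_B1 bz hg hw0 nw ag inv ins_w.
Qed.
End AfterColumnInsertion.

Lemma ins_of_insert_new t U z U' r c :
  insert_from t U z (NewBox U' r c) -> ins U z t (Placed U' r c).
Proof. by move=> h; inversion h. Qed.

(* Neither the bounds [m], [n] on the letters nor the lower bound on the B0
   entries of each row are needed. *)
Theorem mainTheorem3 (m n : nat) (T : tableau) (x y : letter)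
  (T1 : tableau) (r1 c1 : nat) (T2 : tableau) (r2 c2 : nat) :
  0 < m -> 0 < n ->
  spo_tableau m n T ->
  in_B1 n x -> in_B0 m y ->
  col_insert x T (NewBox T1 r1 c1) ->
  row_insert T1 y (NewBox T2 r2 c2) ->
  c1 < c2 /\ r2 <= r1.
Proof.
move=> _ _ spo hx hy /ins_of_insert_new ins_x /ins_of_insert_new ins_y.
have semistdT := spo_semistd spo.
have nx : ~~ isB0 x by case: x hx {ins_x}.
have by0 : isB0 y by case: y hy {ins_y}.
have pre : col_path_pre T 0 x by exists (size T); split => //; left; rewrite get_out.
have [P [a path]] := ins_col_path ins_x erefl erefl semistdT nx pre.
case: spo => [_ [_ [_ [_ [rowB0 [colB0 _]]]]]].
apply: (row_ins_right_above semistdT rowB0 colB0 path ins_y erefl erefl by0); last by left.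
by move=> r k; left.
Qed.
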